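(* Let $H=F[1/t]\subseteq\mathbb{Q}[t,1/t]$. Then $H$ equals the set of all $f(t)\in\mathbb{Q}[t,1/t]$ such that $f(a)\in\mathbb{Z}[1/a]$ for every positive integer $a$.
   Context: $F\subseteq\mathbb{Q}[t]$ is the ring of numerical polynomials, i.e. polynomials $f(t)\in\mathbb{Q}[t]$ with $f(n)\in\mathbb{Z}$ for all integers $n\gg0$; it is free abelian with basis $\alpha_n=\binom tn$, $n\ge0$. $H=F[1/t]$ is the localization of $F$ at $t$, viewed as a subring of $\mathbb{Q}[t,1/t]$. *)

From mathcomp Require Import all_boot all_order all_algebra.
Set Implicit Arguments. Unset Strict Implicit. Unset Printing Implicit Defensive.
Import Order.TTheory GRing.Theory Num.Theory.
Local Open Scope ring_scope.

(* A Laurent polynomial in Q[t,1/t] is represented as p(t) / t^n with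
   p : {poly rat}, n : nat (the pair (p, n)). *)

Definition numerical (g : {poly rat}) : Prop :=
  exists N : int, forall k : int, N <= k -> exists z : int, g.[k%:~R] = z%:~R.

(* p / t^n lies in H = F[1/t] = { g / t^m : g in F, m in N },
   i.e. p / t^n = g / t^m in Q[t,1/t], i.e. p * t^m = g * t^n. *)
Definition in_H (p : {poly rat}) (n : nat) : Prop :=
  exists (g : {poly rat}) (m : nat), numerical g /\ p * 'X^m = g * 'X^n.

Definition in_Z_inv (a : nat) (x : rat) : Prop :=
  exists (z : int) (k : nat), x = z%:~R / (a%:R) ^+ k.

From mathcomp Require Import all_boot all_order all_algebra.
From mathcomp Require Import zify.
Import Order.TTheory GRing.Theory Num.Theory.
Local Open Scope ring_scope.

(* Write c g = q with c a nonzero integer and q in Z[t].  If g is integral at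
   all large integers then c divides q(k) for large k, and since
   q(a + c^2 t) = q(a) (mod c) it divides q(a) for every integer a: a
   numerical polynomial is integral at all integers, so p(a)/a^n = g(a)/a^m
   lies in Z[1/a].  Conversely c p(a) is integral, and so is a^j p(a) when
   p(a)/a^n lies in Z[1/a]; hence gcd(c, a^j) p(a) is integral, and this gcd
   divides a^|c|.  So p t^|c| is numerical and p/t^n = p t^|c| / t^(|c|+n). *)

Lemma dvdn_expn_of_dvdn (d D a k : nat) : (0 < D)%N -> (0 < a)%N ->
  (d %| D)%N -> (d %| a ^ k)%N -> (d %| a ^ D)%N.
Proof.
move=> D0 a0 dD dak; have d0 : (0 < d)%N := dvdn_gt0 D0 dD.
have aD0 : (0 < a ^ D)%N by rewrite expn_gt0 a0.
suff <- : lcmn d (a ^ D) = (a ^ D)%N by apply: dvdn_lcml.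
apply: eqn_from_log => [|//|p]; first by rewrite lcmn_gt0 d0.
rewrite logn_lcm // lognX; apply/maxn_idPr.
have dD_log := dvdn_leq_log p D0 dD.
have dak_log : (logn p d <= k * logn p a)%N.
  by rewrite -lognX; apply: dvdn_leq_log; rewrite ?expn_gt0 ?a0.
have D_log := ltn_logl p D0.
have [pa0|pa_gt0] := posnP (logn p a); last by nia.
by move: dak_log; rewrite pa0 muln0 leqn0 => /eqP ->.
Qed.

Lemma gcdz_mul_int (x : rat) (m n : int) :
  m%:~R * x \is a Num.int -> n%:~R * x \is a Num.int ->
  (gcdz m n)%:~R * x \is a Num.int.
Proof.
move=> mx nx; have [u [v <-]] := Bezoutz m n.
rewrite intrD !intrM mulrDl -!mulrA.
by apply: rpredD; apply: rpredM => //; exact: intr_int.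
Qed.

Lemma natr_expn_mul_int (x : rat) (c : int) (a j : nat) : c != 0 -> (0 < a)%N ->
  c%:~R * x \is a Num.int -> (a ^ j)%:R * x \is a Num.int ->
  (a ^ `|c|)%:R * x \is a Num.int.
Proof.
move=> c0 a0 cx ajx; have := gcdz_mul_int x c (a ^ j)%N cx ajx.
have /dvdnP [e ->] : (gcdn `|c| (a ^ j) %| a ^ `|c|)%N.
  by apply: dvdn_expn_of_dvdn (dvdn_gcdl _ _) (dvdn_gcdr _ _); rewrite ?absz_gt0.
by rewrite natrM -mulrA; apply: rpredM; apply: natr_int.
Qed.

Lemma dvdz_horner_sub (q : {poly int}) (x y : int) : (x - y %| q.[x] - q.[y])%Z.
Proof.
have /factor_theorem [r qE] : root (q - q.[y]%:P) y by rewrite rootE !hornerE subrr.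
have := congr1 (horner^~ x) qE; rewrite !hornerE => ->.
exact: dvdz_mull.
Qed.

Lemma dvdz_horner_from_eventually (q : {poly int}) (c N : int) : c != 0 ->
  (forall k, N <= k -> (c %| q.[k])%Z) -> forall a, (c %| q.[a])%Z.
Proof.
move=> c0 qN a; set k := a + c * (c * `|N - a|%:Z).
have Nk : N <= k.
  have c2_ge1 : 1 <= c * c by nia.
  by rewrite /k mulrA; nia.
have cq : (c %| q.[k] - q.[a])%Z.
  by apply: dvdz_trans (dvdz_horner_sub q k a); rewrite addrAC subrr add0r dvdz_mulr.
by have := rpredB (qN k Nk) cq; rewrite opprB addrC subrK.
Qed.

Lemma rat_poly_int_scale (p : {poly rat}) : exists2 c : int, c != 0 &
  exists q : {poly int}, forall x : int, c%:~R * p.[x%:~R] = q.[x]%:~R.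
Proof.
have [q [c c0 ->]] := rat_poly_scale p.
exists c => //; exists q => x.
by rewrite hornerZ horner_map mulrA mulfV ?mul1r // intr_eq0.
Qed.

Lemma numerical_int (g : {poly rat}) :
  numerical g -> forall k : int, g.[k%:~R] \is a Num.int.
Proof.
move=> [N gN] k; have [c c0 [q qE]] := rat_poly_int_scale g.
have cq : forall k, N <= k -> (c %| q.[k])%Z.
  move=> {}k /gN [z gz]; apply/dvdzP; exists z.
  by apply: (@intr_inj rat); rewrite -qE gz intrM mulrC.
have /dvdzP [e qk] := dvdz_horner_from_eventually q c N c0 cq k.
have -> : g.[k%:~R] = e%:~R.
  have cR : c%:~R != 0 :> rat by rewrite intr_eq0.
  by apply: (mulfI cR); rewrite qE qk intrM mulrC.
exact: intr_int.
Qed.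

Theorem lemma1p2 (p : {poly rat}) (n : nat) :
  in_H p n <->
  (forall a : nat, (0 < a)%N -> in_Z_inv a (p.[a%:R] / (a%:R) ^+ n)).
Proof.
split=> [[g [m [/numerical_int gZ pgE]]] a a0 | pZ].
  have /intrP [z gz] := gZ a; exists z, m.
  have a_neq0 : a%:R != 0 :> rat by rewrite pnatr_eq0 -lt0n.
  apply/eqP; rewrite eqr_div ?expf_neq0 //.
  by have := congr1 (horner^~ a%:R) pgE; rewrite /= !hornerM !hornerXn -gz => ->.
have [c c0 [q qE]] := rat_poly_int_scale p.
exists (p * 'X^`|c|), (`|c| + n)%N; split; last by rewrite exprD mulrA.
exists 1 => -[a a1 | //]; have a0 : (0 < a)%N by lia.
have [z [j pE]] := pZ a a0.
have a_neq0 : a%:R != 0 :> rat by rewrite pnatr_eq0 -lt0n.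
apply/intrP; rewrite hornerM hornerXn -natrX mulrC.
apply: (@natr_expn_mul_int _ c a j c0 a0); first by rewrite qE intr_int.
move/eqP: pE; rewrite eqr_div ?expf_neq0 // => /eqP pE.
by rewrite natrX mulrC pE rpredM ?rpredX ?intr_int ?natr_int.
Qed.
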